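(* Let $T$ be a monoidal monad on $\mathbf{Set}$ and $n\geq 2$. If $T$ is $n$-relevant and affine, then $T$ is relevant.
   Context: A monoidal monad on $\mathbf{Set}$ is a monad with natural $\psi_{X,Y}\colon TX\times TY\to T(X\times Y)$ making it lax monoidal with $\psi^0=\eta_1$ and with $\eta,\mu$ monoidal; $\psi^n$ is its $n$-ary version. $T$ is affine if $T1$ is a one-element set (equivalently $\langle T\pi_1,T\pi_2\rangle\circ\psi_{A,B}=\mathrm{id}_{TA\times TB}$ for all $A,B$). $T$ is $n$-relevant if $\psi^n\circ\Delta^n_{TA}=T\Delta^n_A$ for all sets $A$, where $\Delta^n_X\colon X\to X^n$ is the diagonal; relevant means $2$-relevant. *)

(* monoidal monads on Set, with Set modelled by Rocq's Type and
   equality of morphisms taken pointwise. *)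

Set Implicit Arguments.

Record MonoidalMonad : Type := {
  T :> Type -> Type;
  fmap : forall (X Y : Type), (X -> Y) -> T X -> T Y;
  eta : forall X : Type, X -> T X;
  mu : forall X : Type, T (T X) -> T X;
  psi : forall X Y : Type, T X * T Y -> T (X * Y);
  fmap_id : forall X (t : T X), fmap (fun x => x) t = t;
  fmap_comp : forall X Y Z (f : X -> Y) (g : Y -> Z) (t : T X),
      fmap (fun x => g (f x)) t = fmap g (fmap f t);
  eta_nat : forall X Y (f : X -> Y) (x : X), fmap f (eta x) = eta (f x);
  mu_nat : forall X Y (f : X -> Y) (m : T (T X)),
      fmap f (mu m) = mu (fmap (fmap f) m);
  mu_eta_l : forall X (t : T X), mu (eta t) = t;
  mu_eta_r : forall X (t : T X), mu (fmap (@eta X) t) = t;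
  mu_assoc : forall X (m : T (T (T X))), mu (mu m) = mu (fmap (@mu X) m);
  psi_nat : forall X X' Y Y' (f : X -> X') (g : Y -> Y') (a : T X) (b : T Y),
      psi (fmap f a, fmap g b) = fmap (fun p => (f (fst p), g (snd p))) (psi (a, b));
  (* lax monoidal coherence: associativity and unit laws, with psi^0 = eta_1 *)
  psi_assoc : forall X Y Z (a : T X) (b : T Y) (c : T Z),
      fmap (fun p => (fst (fst p), (snd (fst p), snd p))) (psi (psi (a, b), c))
      = psi (a, psi (b, c));
  psi_unit_l : forall X (b : T X), fmap (@snd unit X) (psi (eta tt, b)) = b;
  psi_unit_r : forall X (a : T X), fmap (@fst X unit) (psi (a, eta tt)) = a;
  eta_monoidal : forall X Y (x : X) (y : Y), psi (eta x, eta y) = eta (x, y);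
  mu_monoidal : forall X Y (a : T (T X)) (b : T (T Y)),
      mu (fmap (@psi X Y) (psi (a, b))) = psi (mu a, mu b)
}.

Arguments fmap {m0 X Y}.
Arguments eta {m0 X}.
Arguments mu {m0 X}.
Arguments psi {m0 X Y}.

Fixpoint tpow (X : Type) (n : nat) : Type :=
  match n with
  | 0 => unit
  | S k => match k with
           | 0 => X
           | S _ => X * tpow X k
           end
  end.

Fixpoint diag (X : Type) (n : nat) : X -> tpow X n :=
  match n as n0 return X -> tpow X n0 with
  | 0 => fun _ => tt
  | S k => match k as k0 return (X -> tpow X k0) -> X -> tpow X (S k0) with
           | 0 => fun _ x => x
           | S _ => fun d x => (x, d x)
           end (@diag X k)
  end.
Arguments diag : clear implicits.

Fixpoint psin (M : MonoidalMonad) (X : Type) (n : nat) : tpow (M X) n -> M (tpow X n) :=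
  match n as n0 return tpow (M X) n0 -> M (tpow X n0) with
  | 0 => fun _ => eta tt
  | S k => match k as k0 return (tpow (M X) k0 -> M (tpow X k0)) ->
                                tpow (M X) (S k0) -> M (tpow X (S k0)) with
           | 0 => fun _ t => t
           | S _ => fun p ts => psi (fst ts, p (snd ts))
           end (@psin M X k)
  end.
Arguments psin : clear implicits.

Definition affine (M : MonoidalMonad) : Prop :=
  exists u : M unit, forall v : M unit, v = u.

Definition n_relevant (M : MonoidalMonad) (n : nat) : Prop :=
  forall (A : Type) (t : M A), psin M A n (diag (M A) n t) = fmap (diag A n) t.

Definition relevant (M : MonoidalMonad) : Prop := n_relevant M 2.

From Stdlib Require Import Lia.

(* For affine T the projection T(X x Y) -> TX undoes psi, since T1 = {eta tt}
   turns the right unit law of psi into a projection law.  Projecting the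
   identity psi^n o Delta^n = T Delta^n onto the first two factors then leaves
   exactly psi o Delta^2 = T Delta^2. *)

Section AffineMonad.

Variable M : MonoidalMonad.
Hypothesis M_affine : affine M.

Lemma fmap_fst_psi (X Y : Type) (a : M X) (b : M Y) :
  fmap (@fst X Y) (psi (a, b)) = a.
Proof.
  destruct M_affine as [u all_u].
  transitivity (fmap (@fst X unit) (fmap (fun p : X * Y => (fst p, tt)) (psi (a, b)))).
  - rewrite <- fmap_comp. reflexivity.
  - change (fun p : X * Y => (fst p, tt))
      with (fun p : X * Y => ((fun x : X => x) (fst p), (fun _ : Y => tt) (snd p))).
    rewrite <- psi_nat, fmap_id.
    rewrite (all_u (fmap (fun _ : Y => tt) b)), <- (all_u (eta tt)).
    apply psi_unit_r.
Qed.

Lemma fmap_fst_snd_psi (X Y Z : Type) (a : M X) (b : M Y) (c : M Z) :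
  fmap (fun p : X * (Y * Z) => (fst p, fst (snd p))) (psi (a, psi (b, c))) = psi (a, b).
Proof.
  rewrite <- psi_assoc, <- fmap_comp.
  change (fun x : X * Y * Z => (fst (fst x), snd (fst x)))
    with (fun x : X * Y * Z => (fun q : X * Y => (fst q, snd q)) (fst x)).
  rewrite (fmap_comp _ (@fst (X * Y) Z) (fun q : X * Y => (fst q, snd q))), fmap_fst_psi.
  change (fun q : X * Y => (fst q, snd q))
    with (fun q : X * Y => ((fun x : X => x) (fst q), (fun y : Y => y) (snd q))).
  rewrite <- psi_nat, !fmap_id.
  reflexivity.
Qed.

End AffineMonad.

Theorem proposition5 (M : MonoidalMonad) (n : nat) :
  2 <= n -> n_relevant M n -> affine M -> relevant M.
Proof.
  intros n_ge2 M_rel M_affine.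
  destruct n as [| [| [| j]]]; try lia.
  - exact M_rel.
  - intros A t.
    specialize (M_rel A t).
    apply (f_equal (fmap (fun p : A * (A * tpow A (S j)) => (fst p, fst (snd p))))) in M_rel.
    cbn in M_rel.
    rewrite fmap_fst_snd_psi, <- fmap_comp in M_rel by exact M_affine.
    exact M_rel.
Qed.
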